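(* Consider the perturbed asynchronous consensus scheme: given $x_i^0\in\mathbb R$, $v_i^t=0$ for $t=-D,\dots,0$, and scalars $\{\delta^k\}$, at iteration $k$ $v_{i^k}^{k+1}=x_{i^k}^k+\delta^k$, $x_{i^k}^{k+1}=w_{i^ki^k}v_{i^k}^{k+1}+\sum_{j\in\mathcal N_{i^k}^{\rm in}}w_{i^kj}v_j^{k-d_j^k}$, and $v_j^{k+1}=v_j^k$, $x_j^{k+1}=x_j^k$ for $j\ne i^k$. Let $\mathbf h^k=[\mathbf x^{k\top},\mathbf v^{k\top},\mathbf v^{k-1\top},\dots,\mathbf v^{k-D\top}]^\top\in\mathbb R^{(D+2)I}$, so that $\mathbf h^{k+1}=\widehat{\mathbf W}^k(\mathbf h^k+\delta^k\mathbf e_{i^k})$. Let $C_2>0$, $\rho\in(0,1)$ and stochastic vectors $\{\boldsymbol\psi^k\}$ satisfy $\|\widehat{\mathbf W}^{k:t}-\mathbf 1\boldsymbol\psi^{t\top}\|\le C_2\rho^{k-t}$ for all $k\ge t\ge0$. Define $\bar h^0=\boldsymbol\psi^{0\top}\mathbf h^0$ and $\bar h^{k+1}=\boldsymbol\psi^{0\top}\mathbf h^0+\sum_{l=0}^k\psi_{i^l}^l\delta^l$. Then for all $k\in\mathbb N_0$, $$\|\mathbf h^{k+1}-\mathbf 1\bar h^{k+1}\|\le C_2\rho^k\|\mathbf h^0-\mathbf 1\bar h^0\|+C_2\sum_{l=0}^k\rho^{k-l}|\delta^l|.$$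
   Context: $\mathcal G=(\mathcal V,\mathcal E)$, $\mathcal V=\{1,\dots,I\}$, digraph without self-loops, $\mathcal N_i^{\rm in}=\{j:(j,i)\in\mathcal E\}$; $\mathbf W=(w_{ij})$ row-stochastic with $w_{ij}=0$ unless $i=j$ or $(j,i)\in\mathcal E$. $(i^k,\mathbf d^k)$ with $i^k\in\mathcal V$, $0\le d_j^k\le D$. $\mathbf e_i$ is the $i$-th canonical vector of $\mathbb R^{(D+2)I}$. Augmented matrix $\widehat{\mathbf W}^k$: entry $(r,m)$ equals $w_{i^ki^k}$ if $r=m=i^k$; $w_{i^kj}$ if $r=i^k$ and $m=j+(d_j^k+1)I$, $j\in\mathcal N^{\rm in}_{i^k}$; $1$ if $r=m\in\{1,\dots,2I\}\setminus\{i^k,i^k+I\}$; $1$ if $r\in\{2I+1,\dots,(D+2)I\}\cup\{i^k+I\}$ and $m=r-I$; $0$ otherwise. $\widehat{\mathbf W}^{k:t}=\widehat{\mathbf W}^k\cdots\widehat{\mathbf W}^t$ ($=\widehat{\mathbf W}^t$ if $k=t$). $\|\cdot\|$ is the Euclidean/spectral norm. *)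

From HB Require Import structures.
From mathcomp Require Import all_boot all_order all_algebra.
Set Implicit Arguments. Unset Strict Implicit. Unset Printing Implicit Defensive.
Import Order.TTheory GRing.Theory Num.Theory.
Local Open Scope ring_scope.

(* Indexing convention (0-based): the augmented vector h in R^((D+2)I) has
   entry number  j + b*I  (b < D+2, j < I) equal to
     x_j^k            if b = 0,
     v_j^(k-(b-1))    if b >= 1.                                           *)

(* Augmented matrix \widehat W^k, given the current active node i = i^k and
   the delays d = d^k (d j = d_j^k).  Entry (r,m) as in the paper, shifted to
   0-based indices. *)
Definition What (R : pzRingType) (I D : nat) (E : rel 'I_I) (W : 'M[R]_I)
    (i : 'I_I) (d : 'I_I -> nat) : 'M[R]_(D.+2 * I) :=
  \matrix_(r, m)
    (if (r : nat) == (i : nat) then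
       (if (m : nat) == (i : nat) then W i i
        else \sum_(j : 'I_I | E j i && ((m : nat) == (j + (d j).+1 * I)%N)) W i j)
     else if ((r < 2 * I)%N && ((r : nat) != (i + I)%N)) then ((m : nat) == r)%:R
     else (((m + I)%N) == r)%:R).

(* \widehat W^{k:t} = \widehat W^k ... \widehat W^t, as Wprod Wh t (k - t). *)
Fixpoint Wprod (R : pzRingType) (n : nat) (Wh : nat -> 'M[R]_n) (t s : nat) : 'M[R]_n :=
  match s with
  | 0 => Wh t
  | s'.+1 => Wh (t + s'.+1)%N *m Wprod Wh t s'
  end.

(* The perturbed asynchronous consensus scheme.  xv k = (x^k, s |-> v^s);
   v^s = 0 for s <= 0 (negative times are represented by truncated
   subtraction landing on time 0, where v is 0). *)
Fixpoint xv (R : pzRingType) (I : nat) (E : rel 'I_I) (W : 'M[R]_I)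
    (ik : nat -> 'I_I) (d : nat -> 'I_I -> nat) (x0 : 'I_I -> R)
    (delta : nat -> R) (k : nat) : ('I_I -> R) * (nat -> 'I_I -> R) :=
  match k with
  | 0 => (x0, fun _ _ => 0)
  | k'.+1 =>
      let: (x, v) := xv E W ik d x0 delta k' in
      let i := ik k' in
      let vnew := x i + delta k' in
      let xnew := W i i * vnew + \sum_(j : 'I_I | E j i) W i j * v (k' - d k' j)%N j in
      (fun j => if j == i then xnew else x j,
       fun s j => if s == k'.+1 then (if j == i then vnew else v k' j) else v s j)
  end.

Definition hvec (R : pzRingType) (I D : nat) (E : rel 'I_I) (W : 'M[R]_I)
    (ik : nat -> 'I_I) (d : nat -> 'I_I -> nat) (x0 : 'I_I -> R)
    (delta : nat -> R) (k : nat) : 'cV[R]_(D.+2 * I) :=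
  let: (x, v) := xv E W ik d x0 delta k in
  \col_(r < D.+2 * I)
    (let b := (r %/ I)%N in
     match (insub (r %% I)%N : option 'I_I) with
     | Some j => if b == 0%N then x j else v (k - b.-1)%N j
     | None => 0
     end).

Definition ecol (R : pzRingType) (n i : nat) : 'cV[R]_n := \col_(r < n) ((r : nat) == i)%:R.

Definition vnorm (R : rcfType) (n : nat) (v : 'cV[R]_n) : R :=
  Num.sqrt (\sum_(r < n) (v r 0) ^+ 2).

Definition specnorm_le (R : rcfType) (n : nat) (A : 'M[R]_n) (c : R) : Prop :=
  forall x : 'cV[R]_n, vnorm (A *m x) <= c * vnorm x.

Definition stochastic_vec (R : numDomainType) (n : nat) (p : 'cV[R]_n) : Prop :=
  (forall r, 0 <= p r 0) /\ \sum_(r < n) p r 0 = 1.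

Definition row_stochastic (R : numDomainType) (n : nat) (A : 'M[R]_n) : Prop :=
  (forall i j, 0 <= A i j) /\ (forall i, \sum_(j < n) A i j = 1).

(* Unrolling h^{k+1} = W^k (h^k + delta^k e_{i^k}) gives
     h^{k+1} = W^{0:k} h^0 + sum_{l <= k} delta^l W^{l:k} e_{i^l}.
   Every augmented matrix fixes the all-ones vector 1 (row i^k of W^k carries
   the row of W, which sums to one, and every other row is a unit vector), hence
   so does every product W^{l:k}; and psi^T 1 = 1.  So subtracting 1 hbar^{k+1}
   amounts to replacing each W^{l:k} by W^{l:k} - 1 psi^{l T}, after which the
   triangle inequality, the contraction hypothesis and |e_i| = 1 give the bound. *)
From HB Require Import structures.
From mathcomp Require Import all_boot all_order all_algebra.
From mathcomp Require Import ring zify.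
Import Order.TTheory GRing.Theory Num.Theory.
Local Open Scope ring_scope.
Set Implicit Arguments.
Unset Strict Implicit.

Section EuclideanNorm.
Variables (R : rcfType) (n : nat).
Implicit Types u v : 'cV[R]_n.

Lemma vnorm_ge0 v : 0 <= vnorm v.
Proof. exact: sqrtr_ge0. Qed.

Lemma vnorm_sqr v : vnorm v ^+ 2 = \sum_(r < n) v r 0 ^+ 2.
Proof. by rewrite sqr_sqrtr // sumr_ge0 // => r _; rewrite sqr_ge0. Qed.

Lemma vnormZ (a : R) v : vnorm (a *: v) = `|a| * vnorm v.
Proof.
rewrite /vnorm; under eq_bigr => r _ do rewrite mxE exprMn.
by rewrite -mulr_sumr sqrtrM ?sqr_ge0 // sqrtr_sqr.
Qed.

Lemma Lagrange_identity u v :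
  \sum_(i < n) \sum_(j < n) (u i 0 * v j 0 - u j 0 * v i 0) ^+ 2 =
  (\sum_(r < n) u r 0 ^+ 2) * (\sum_(r < n) v r 0 ^+ 2) *+ 2
  - (\sum_(r < n) u r 0 * v r 0) ^+ 2 *+ 2.
Proof.
have sum_prod (f g : 'I_n -> R) :
    \sum_(i < n) \sum_(j < n) f i * g j = (\sum_(i < n) f i) * (\sum_(j < n) g j).
  by rewrite big_distrlr.
rewrite (eq_bigr (fun i => \sum_(j < n) (u i 0 ^+ 2 * v j 0 ^+ 2
    + u j 0 ^+ 2 * v i 0 ^+ 2 - (u i 0 * v i 0) * (u j 0 * v j 0) *+ 2))); last first.
  by move=> i _; apply: eq_bigr => j _; ring.
under eq_bigr => i _ do rewrite sumrB big_split sumrMnl /=.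
rewrite sumrB big_split sumrMnl /= [X in _ + X - _]exchange_big /= !sum_prod.
by rewrite expr2 mulr2n.
Qed.

Lemma Cauchy_Schwarz u v :
  (\sum_(r < n) u r 0 * v r 0) ^+ 2 <=
  (\sum_(r < n) u r 0 ^+ 2) * (\sum_(r < n) v r 0 ^+ 2).
Proof.
have : 0 <= \sum_(i < n) \sum_(j < n) (u i 0 * v j 0 - u j 0 * v i 0) ^+ 2.
  by do 2![apply: sumr_ge0 => ? _]; rewrite sqr_ge0.
by rewrite Lagrange_identity subr_ge0 lerMn2r.
Qed.

Lemma vnormD u v : vnorm (u + v) <= vnorm u + vnorm v.
Proof.
rewrite -(ler_pXn2r (n := 2)) ?nnegrE ?addr_ge0 ?vnorm_ge0 //.
have -> : vnorm (u + v) ^+ 2 = vnorm u ^+ 2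
    + (\sum_(r < n) u r 0 * v r 0) *+ 2 + vnorm v ^+ 2.
  rewrite !vnorm_sqr -sumrMnl -!big_split /=.
  by apply: eq_bigr => r _; rewrite !mxE; ring.
rewrite sqrrD lerD2r lerD2l lerMn2r /= (le_trans (ler_norm _)) //.
rewrite -(ler_pXn2r (n := 2)) ?nnegrE ?mulr_ge0 ?vnorm_ge0 //.
by rewrite real_normK ?num_real // exprMn !vnorm_sqr Cauchy_Schwarz.
Qed.

Lemma vnorm_sum (m : nat) (f : 'I_m -> 'cV[R]_n) :
  vnorm (\sum_(l < m) f l) <= \sum_(l < m) vnorm (f l).
Proof.
apply: (big_ind2 (fun w s => vnorm w <= s)) => //.
- by rewrite /vnorm big1 ?sqrtr0 // => r _; rewrite mxE expr0n.
- by move=> w1 s1 w2 s2 ? ?; apply: le_trans (vnormD _ _) (lerD _ _).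
Qed.

Lemma vnorm_ecol (i : nat) : (i < n)%N -> vnorm (ecol R n i) = 1.
Proof.
move=> lt_in; rewrite /vnorm (bigD1 (Ordinal lt_in)) //= big1 ?addr0.
  by rewrite mxE eqxx expr1n sqrtr1.
by move=> r; rewrite -val_eqE /= mxE => /negbTE ->; rewrite expr0n.
Qed.

End EuclideanNorm.

Section PerturbedProducts.
Variables (R : rcfType) (n : nat) (Wh : nat -> 'M[R]_n).
Local Notation one := (const_mx 1 : 'cV[R]_n).

Lemma const_mx_scale (c : R) : const_mx c = c *: one.
Proof. by apply/matrixP => i j; rewrite !mxE mulr1. Qed.

Lemma mul_one_trmx (p v : 'cV[R]_n) : one *m p^T *m v = (p^T *m v) 0 0 *: one.
Proof.
apply/matrixP => i j; rewrite -mulmxA !mxE big_ord1 !mxE mul1r mulr1.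
by rewrite [j]ord1.
Qed.

Lemma stochastic_vec_one (p : 'cV[R]_n) (c : R) :
  stochastic_vec p -> (p^T *m (c *: one)) 0 0 = c.
Proof.
case=> _ sum_p; rewrite -scalemxAr mxE.
suff -> : (p^T *m one) 0 0 = 1 by rewrite mulr1.
by rewrite -[RHS]sum_p mxE; apply: eq_bigr => r _; rewrite !mxE mulr1.
Qed.

Lemma Wprod_succ t k : (t <= k)%N ->
  Wh k.+1 *m Wprod Wh t (k - t) = Wprod Wh t (k.+1 - t).
Proof. by move=> le_tk; rewrite subSn //= addnS subnKC. Qed.

Hypothesis Wh_one : forall k, Wh k *m one = one.

Lemma Wprod_one t s : Wprod Wh t s *m one = one.
Proof. by elim: s => [|s IH] //=; rewrite -mulmxA IH. Qed.

Variables (e : nat -> 'cV[R]_n) (delta : nat -> R) (h : nat -> 'cV[R]_n).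
Hypothesis h_step : forall k, h k.+1 = Wh k *m (h k + delta k *: e k).

Lemma h_unroll k : h k.+1 =
  Wprod Wh 0 k *m h 0%N + \sum_(l < k.+1) delta l *: (Wprod Wh l (k - l) *m e l).
Proof.
elim: k => [|k IH]; first by rewrite h_step big_ord1 mulmxDr scalemxAr.
rewrite h_step IH [in RHS]big_ord_recr /= subnn !mulmxDr mulmx_sumr mulmxA -addrA.
congr (_ + (_ + _)); last by rewrite scalemxAr.
by apply: eq_bigr => l _; rewrite -scalemxAr mulmxA Wprod_succ // -ltnS.
Qed.

Variable psi : nat -> 'cV[R]_n.
Hypothesis psi_stochastic : forall t, stochastic_vec (psi t).

Definition hbar k :=
  ((psi 0%N)^T *m h 0%N) 0 0 + \sum_(l < k) ((psi l)^T *m e l) 0 0 * delta l.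

Lemma deviation_decomposition k :
  h k.+1 - const_mx (hbar k.+1) =
  (Wprod Wh 0 k - one *m (psi 0%N)^T) *m (h 0%N - const_mx (hbar 0%N)) +
  \sum_(l < k.+1) delta l *: ((Wprod Wh l (k - l) - one *m (psi l)^T) *m e l).
Proof.
rewrite (const_mx_scale (hbar _)) (const_mx_scale (hbar 0)) h_unroll /hbar big_ord0 addr0.
rewrite mulmxBl !mulmxBr !mul_one_trmx stochastic_vec_one // -scalemxAr Wprod_one.
rewrite subrr subr0 scalerDl scaler_suml.
under [in RHS]eq_bigr => l _ do rewrite mulmxBl mul_one_trmx scalerBr scalerA.
rewrite sumrB; under [X in _ = _ + (_ - X)]eq_bigr => l _ do rewrite mulrC.
by rewrite opprD !addrA (addrAC (Wprod Wh 0 k *m h 0%N)).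
Qed.

Variables C2 rho : R.
Hypothesis Wprod_contraction : forall k t, (t <= k)%N ->
  specnorm_le (Wprod Wh t (k - t) - one *m (psi t)^T) (C2 * rho ^+ (k - t)).
Hypothesis e_unit : forall l, vnorm (e l) = 1.

Lemma deviation_bound k :
  vnorm (h k.+1 - const_mx (hbar k.+1))
  <= C2 * rho ^+ k * vnorm (h 0%N - const_mx (hbar 0%N))
     + C2 * \sum_(l < k.+1) rho ^+ (k - l) * `|delta l|.
Proof.
rewrite deviation_decomposition; apply: le_trans (vnormD _ _) _; apply: lerD.
  by have := Wprod_contraction (leq0n k) (h 0%N - const_mx (hbar 0%N)); rewrite subn0.
apply: le_trans (vnorm_sum _) _; rewrite mulr_sumr; apply: ler_sum => l _.
have := Wprod_contraction (leq_ord l) (e l); rewrite e_unit mulr1 vnormZ => contr_l.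
by rewrite mulrA [X in _ <= X]mulrC ler_wpM2l.
Qed.

End PerturbedProducts.

Lemma sum_indicator_ord (R : pzSemiRingType) (n c : nat) (F : nat -> R) : (c < n)%N ->
  \sum_(m < n) ((m : nat) == c)%:R * F m = F c.
Proof.
move=> lt_cn; rewrite (bigD1 (Ordinal lt_cn)) //= eqxx mul1r big1 ?addr0 //.
by move=> m; rewrite -val_eqE /= => /negbTE ->; rewrite mul0r.
Qed.

Section AugmentedMatrix.
Variables (R : pzRingType) (I D : nat) (E : rel 'I_I) (W : 'M[R]_I).
Variables (i : 'I_I) (dd : 'I_I -> nat).
Hypothesis dd_le : forall j, (dd j <= D)%N.

Lemma What_row_sum (r : 'I_(D.+2 * I)) (F : nat -> R) :
  \sum_m What D E W i dd r m * F m =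
  if (r : nat) == i then
    W i i * F i + \sum_(j : 'I_I | E j i) W i j * F (j + (dd j).+1 * I)%N
  else if ((r < 2 * I)%N && ((r : nat) != (i + I)%N)) then F r
  else F (r - I)%N.
Proof.
have lt_iI := ltn_ord i.
have lt_nbr (j : 'I_I) : (j + (dd j).+1 * I < D.+2 * I)%N.
  by move: (dd_le j) (ltn_ord j); nia.
have nbr_neq (j : 'I_I) : ((i : nat) == (j + (dd j).+1 * I)%N) = false.
  by apply/eqP; nia.
under eq_bigr => m _ do rewrite mxE.
case: ifP => [_|_].
  rewrite (eq_bigr (fun m : 'I_(D.+2 * I) => ((m : nat) == i)%:R * (W i i * F m) +
      \sum_(j | E j i) ((m : nat) == (j + (dd j).+1 * I)%N)%:R * (W i j * F m))).
    rewrite big_split exchange_big /= (sum_indicator_ord (fun m => W i i * F m)); last by nia.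
    by congr (_ + _); apply: eq_bigr => j _; rewrite (sum_indicator_ord (fun m => W i j * F m)).
  move=> m _; case: eqP => [m_i | _].
    by rewrite mul1r big1 ?addr0 // => j _; rewrite m_i nbr_neq mul0r.
  rewrite mul0r add0r mulr_suml big_mkcondr /=; apply: eq_bigr => j _.
  by case: eqP; rewrite ?mul1r ?mul0r.
have lt_rn := ltn_ord r.
case: ifP => r_low.
  by rewrite -(sum_indicator_ord F lt_rn); apply: eq_bigr => m _; rewrite eq_sym.
have le_Ir : (I <= r)%N.
  by move/negbT: r_low; rewrite negb_and negbK => /orP[|/eqP ->]; lia.
rewrite -(@sum_indicator_ord _ (D.+2 * I) (r - I)); last by lia.
by apply: eq_bigr => m _; congr (_%:R * _); apply/eqP/eqP; lia.
Qed.

Hypothesis E_irrefl : forall j, ~~ E j j.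
Hypothesis W_row_sum : forall j, \sum_(l < I) W j l = 1.
Hypothesis W_supp : forall j l, j != l -> ~~ E l j -> W j l = 0.

Lemma W_diag_add_nbr : W i i + \sum_(j : 'I_I | E j i) W i j = 1.
Proof.
rewrite -(W_row_sum i) [RHS](bigD1 i) //=; congr (_ + _).
rewrite [RHS](bigID (fun j => E j i)) /= [X in _ = _ + X]big1 ?addr0 => [|j /andP[]]; last first.
  by move=> ne_ji Eji; apply: W_supp; rewrite // eq_sym.
apply: eq_bigl => j; case Eji: (E j i); rewrite ?andbF ?andbT //.
by apply/esym/eqP => j_i; move: (E_irrefl i); rewrite -{1}j_i Eji.
Qed.

Lemma What_mul_one : What D E W i dd *m const_mx 1 = const_mx 1 :> 'cV[R]_(D.+2 * I).
Proof.
apply/matrixP => r c; rewrite !mxE.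
under eq_bigr => m _ do rewrite [const_mx 1 m c]mxE.
rewrite (What_row_sum r (fun _ => 1)); case: ifP => _; last by case: ifP.
by rewrite mulr1; under eq_bigr => j _ do rewrite mulr1; exact: W_diag_add_nbr.
Qed.

End AugmentedMatrix.

Section AugmentedState.
Variables (R : pzRingType) (I D : nat) (E : rel 'I_I) (W : 'M[R]_I).
Variables (ik : nat -> 'I_I) (d : nat -> 'I_I -> nat) (x0 : 'I_I -> R).
Variable delta : nat -> R.
Hypothesis d_le : forall k j, (d k j <= D)%N.

Local Notation xv := (xv E W ik d x0 delta).
Local Notation hvec := (hvec D E W ik d x0 delta).

Definition hentry (x : 'I_I -> R) (v : nat -> 'I_I -> R) (k r : nat) : R :=
  match (insub (r %% I)%N : option 'I_I) with
  | Some j => if (r %/ I)%N == 0%N then x j else v (k - (r %/ I).-1)%N j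
  | None => 0
  end.

Lemma hentry_block x v k (j : 'I_I) b :
  hentry x v k (j + b * I) = if b == 0%N then x j else v (k - b.-1)%N j.
Proof.
have I_gt0 : (0 < I)%N := leq_ltn_trans (leq0n j) (ltn_ord j).
rewrite /hentry addnC modnMDl modn_small // divnMDl // divn_small // addn0.
by case: insubP => [j' _ /val_inj -> | ]; rewrite ?ltn_ord.
Qed.

Lemma hentry_ord x v k (j : 'I_I) : hentry x v k j = x j.
Proof. by have := hentry_block x v k j 0; rewrite mul0n addn0. Qed.

Lemma hvecE k : hvec k = \col_r hentry (xv k).1 (xv k).2 k r.
Proof. by rewrite /hvec; case: xv. Qed.

Lemma hvec_step k : hvec k.+1 =
  What D E W (ik k) (d k) *m (hvec k + delta k *: ecol R (D.+2 * I) (ik k)).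
Proof.
rewrite !hvecE /=; case: (xv k) => x v; apply/matrixP => r c; rewrite ord1 !mxE.
pose F m := hentry x v k m + delta k * ((m : nat) == ik k)%:R.
rewrite (eq_bigr (fun m => What D E W (ik k) (d k) r m * F m)); last by move=> m _; rewrite !mxE.
rewrite (What_row_sum E W (ik k) (d_le k) r F) {}/F.
have I_gt0 : (0 < I)%N := leq_ltn_trans (leq0n (ik k)) (ltn_ord (ik k)).
have lt_ikI := ltn_ord (ik k).
have off_ik (j : 'I_I) b : ((j + b.+1 * I)%N == ik k) = false by apply/eqP; nia.
under [in RHS]eq_bigr => j _ do rewrite hentry_block off_ik mulr0 addr0 /=.
have [j [b ->]] : exists (j : 'I_I) b, (r : nat) = (j + b * I)%N.
  by exists (Ordinal (ltn_pmod r I_gt0)), (r %/ I)%N; rewrite /= addnC -divn_eq.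
have lt_jI := ltn_ord j.
case: b => [|[|b]].
- rewrite mul0n addn0 !hentry_ord /=.
  case: (eqVneq j (ik k)) => [->|ne_j_ik]; first by rewrite !eqxx mulr1.
  have -> : ((j : nat) == ik k) = false by apply/negbTE.
  by rewrite ifT ?mulr0 ?addr0 //; apply/andP; split; [lia | apply/eqP; lia].
- rewrite hentry_block /=.
  have -> : (j + 1 * I < 2 * I)%N by lia.
  rewrite subn0 eqxx off_ik /=.
  case: (eqVneq j (ik k)) => [->|ne_j_ik].
    by rewrite mul1n eqxx /= addnK hentry_ord eqxx mulr1.
  have -> : (j + 1 * I != ik k + I)%N by apply: contra ne_j_ik; rewrite mul1n eqn_add2r.
  by rewrite hentry_block mulr0 addr0 subn0.
- rewrite hentry_block /=.
  have -> : (j + b.+2 * I < 2 * I)%N = false by lia.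
  have -> : (j + b.+2 * I - I = j + b.+1 * I)%N by lia.
  have -> : (k.+1 - b.+1 == k.+1)%N = false by apply/eqP; lia.
  by rewrite !off_ik /= hentry_block mulr0 addr0 subSS.
Qed.

End AugmentedState.

Theorem proposition2 (R : rcfType) (I D : nat) (E : rel 'I_I) (W : 'M[R]_I)
  (ik : nat -> 'I_I) (d : nat -> 'I_I -> nat) (x0 : 'I_I -> R) (delta : nat -> R)
  (C2 rho : R) (psi : nat -> 'cV[R]_(D.+2 * I))
  (hE : forall i, ~~ E i i)
  (hWst : row_stochastic W)
  (hWsupp : forall i j, i != j -> ~~ E j i -> W i j = 0)
  (hd : forall k j, (d k j <= D)%N)
  (hC2 : 0 < C2) (hrho0 : 0 < rho) (hrho1 : rho < 1)
  (hpsi : forall t, stochastic_vec (psi t))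
  (hcontr : forall k t, (t <= k)%N ->
     specnorm_le (Wprod (fun k => What D E W (ik k) (d k)) t (k - t)
                  - const_mx 1 *m (psi t)^T) (C2 * rho ^+ (k - t))) :
  let h := hvec D E W ik d x0 delta in
  let hbar := fun k : nat =>
     ((psi 0%N)^T *m h 0%N) 0 0
     + \sum_(l < k) ((psi l)^T *m ecol R (D.+2 * I)%N (ik l)) 0 0 * delta l in
  forall k : nat,
    vnorm (h k.+1 - const_mx (hbar k.+1))
    <= C2 * rho ^+ k * vnorm (h 0%N - const_mx (hbar 0%N))
       + C2 * \sum_(l < k.+1) rho ^+ (k - l) * `|delta l|.
Proof.
move=> h hbar k.
have What_one k' : What D E W (ik k') (d k') *m const_mx 1 = const_mx 1 :> 'cV_(D.+2 * I).
  exact: What_mul_one (hd k') hE hWst.2 hWsupp.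
have e_unit l : vnorm (ecol R (D.+2 * I) (ik l)) = 1.
  by apply: vnorm_ecol; rewrite (leq_trans (ltn_ord _)) // leq_pmull.
exact: (@deviation_bound R _ _ What_one (fun l => ecol R (D.+2 * I) (ik l)) delta h
  (hvec_step E W ik x0 delta hd) psi hpsi C2 rho hcontr e_unit k).
Qed.
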